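(* Let $\mathbb{T}$ be a finite time scale and $a\in\mathbb{T}$ such that exactly $m$ elements of $\mathbb{T}$ are larger than $a$ and exactly $r$ elements are smaller than $a$, where $m\geq1$, $r\geq0$ and $r+m\geq2$; thus $\mathbb{T}$ has $n=m+r+1$ elements. Let $\alpha=\min\mathbb{T}$, $\beta=\rho(\max\mathbb{T})$ (the second largest element of $\mathbb{T}$), let $q$ be real-valued, and consider the boundary value problem $$-y^{\Delta\Delta}(t)+q(t)\,y(a)=\lambda\, y^{\sigma}(t),\quad t\in\mathbb{T}^{\kappa^{2}},\qquad U(y)=0,\quad V(y)=0,$$ where $U(y)=a_{11}y(\alpha)+a_{12}y^{\Delta}(\alpha)+a_{21}y(\beta)+a_{22}y^{\Delta}(\beta)$ and $V(y)=b_{11}y(\alpha)+b_{12}y^{\Delta}(\alpha)+b_{21}y(\beta)+b_{22}y^{\Delta}(\beta)$ with real coefficients $a_{ij},b_{ij}$. Let $$A=\begin{pmatrix}a_{11}\mu(\alpha)-a_{12} & b_{11}\mu(\alpha)-b_{12}\\ a_{22} & b_{22}\end{pmatrix}.$$ If $\det A\neq0$, the problem has exactly $n-2$ eigenvalues counted with multiplicities; otherwise the number of eigenvalues counted with multiplicities is less than $n-2$.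
   Context: For a time scale $\mathbb{T}$, $\sigma$, $\rho$ are the forward and backward jump operators, $\mu(t)=\sigma(t)-t$, $y^{\sigma}=y\circ\sigma$, $y^{\Delta}$, $y^{\Delta\Delta}$ are the delta derivatives (on a finite time scale $y^{\Delta}(t)=(y(\sigma(t))-y(t))/\mu(t)$), $\mathbb{T}^{\kappa}$ is $\mathbb{T}$ with its largest element removed and $\mathbb{T}^{\kappa^2}=(\mathbb{T}^{\kappa})^{\kappa}$. An eigenvalue is a $\lambda\in\mathbb{C}$ for which the problem has a nontrivial solution. Let $S(t,\lambda)$, $C(t,\lambda)$ be the solutions of the equation with $S(a,\lambda)=0$, $S^{\Delta}(a,\lambda)=1$, $C(a,\lambda)=1$, $C^{\Delta}(a,\lambda)=0$ and $\Delta(\lambda)=U(C)V(S)-V(C)U(S)$; on a finite time scale $\Delta(\lambda)$ is a polynomial in $\lambda$ whose zeros are exactly the eigenvalues, and the multiplicity of an eigenvalue is its multiplicity as a zero of $\Delta$. *)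

From HB Require Import structures.
From mathcomp Require Import all_boot all_order all_algebra.
From mathcomp Require Import reals.
From mathcomp Require Import complex.
Set Implicit Arguments. Unset Strict Implicit. Unset Printing Implicit Defensive.
Import Order.TTheory GRing.Theory Num.Theory.
Local Open Scope ring_scope.
Local Open Scope complex_scope.

Section TimeScale.
Variable R : realType.
Local Notation C := (R[i]).

(* A finite time scale is represented by the strictly increasing list [ts]
   of its elements (sorted <%R ts). *)

Definition tsigma (ts : seq R) (t : R) : R := head t [seq x <- ts | t < x].
Definition trho (ts : seq R) (t : R) : R := last t [seq x <- ts | x < t].
Definition tmu (ts : seq R) (t : R) : R := tsigma ts t - t.
Definition tmin (ts : seq R) : R := head 0 ts.
Definition tmax (ts : seq R) : R := last 0 ts.
Definition tkappa (ts : seq R) : seq R := take (size ts).-1 ts.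
Definition tkappa2 (ts : seq R) : seq R := tkappa (tkappa ts).

Definition tdelta (ts : seq R) (y : R -> C) (t : R) : C :=
  (y (tsigma ts t) - y t) / (tmu ts t)%:C.

Definition solves (ts : seq R) (q : R -> R) (a : R) (lam : C) (y : R -> C) : Prop :=
  forall t, t \in tkappa2 ts ->
    - tdelta ts (tdelta ts y) t + (q t)%:C * y a = lam * y (tsigma ts t).

Definition bform (ts : seq R) (c11 c12 c21 c22 : R) (y : R -> C) : C :=
  let al := tmin ts in let be := trho ts (tmax ts) in
  c11%:C * y al + c12%:C * tdelta ts y al + c21%:C * y be + c22%:C * tdelta ts y be.

Definition Amat (ts : seq R) (a11 a12 a22 b11 b12 b22 : R) : 'M[R]_2 :=
  \matrix_(i < 2, j < 2)
    if i == 0 then (if j == 0 then a11 * tmu ts (tmin ts) - a12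
                              else b11 * tmu ts (tmin ts) - b12)
    else (if j == 0 then a22 else b22).

End TimeScale.

Definition nzeros_mult (F : fieldType) (p : {poly F}) (k : nat) : Prop :=
  p != 0 /\ exists s : seq F,
    [/\ uniq s, (forall z, root p z -> z \in s) & (\sum_(z <- s) mup z p)%N = k].

(* A solution of the equation is determined by y(a) and y^Delta(a): marching r steps
   to the left of a and m - 1 steps to the right expresses y and y^Delta at alpha
   and beta as polynomials in lambda of degree at most r and m - 1, so
   Delta(lambda) = U(C)V(S) - V(C)U(S) has degree at most r + m - 1 = n - 2.
   Expanding Delta along the 2x4 boundary matrix, the minors taken at a single
   endpoint are Wronskians of C and S; these would be constant without the term
   q(t)y(a), which only adds lower-order terms, so they do not reach degree n - 2.
   The mixed minors have explicit leading coefficients, which combine into a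
   nonzero multiple of det A.  Over C a nonzero polynomial of degree d has exactly
   d zeros counted with multiplicity. *)

From mathcomp Require Import all_boot all_order all_algebra.
From mathcomp Require Import reals complex.
From mathcomp Require Import ring zify.
Import Order.TTheory GRing.Theory Num.Theory.
Local Open Scope ring_scope.
Local Open Scope complex_scope.
Set Implicit Arguments. Unset Strict Implicit. Unset Printing Implicit Defensive.

Section PolySize.
Variable R : nzRingType.
Implicit Types (p q : {poly R}) (c : R).

Lemma size_polyD_leq p q n :
  (size p <= n)%N -> (size q <= n)%N -> (size (p + q)%R <= n)%N.
Proof. by move=> hp hq; apply: leq_trans (size_polyD _ _) _; rewrite geq_max hp. Qed.

Lemma size_polyB_leq p q n :
  (size p <= n)%N -> (size q <= n)%N -> (size (p - q)%R <= n)%N.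
Proof. by move=> hp hq; rewrite size_polyD_leq ?size_polyN. Qed.

Lemma size_polyCM_leq c p : (size (c%:P * p)%R <= size p)%N.
Proof. by rewrite mul_polyC size_scale_leq. Qed.

Lemma size_polyXM_leq p n : (size p <= n)%N -> (size ('X * p)%R <= n.+1)%N.
Proof.
have [->|p0] := eqVneq p 0; first by rewrite mulr0 size_poly0.
by rewrite -commr_polyX size_mulX.
Qed.

Lemma size_poly_leq_coef p n : (size p <= n.+1)%N -> p`_n = 0 -> (size p <= n)%N.
Proof.
move=> /leq_sizeP hp pn; apply/leq_sizeP => j.
by rewrite leq_eqVlt => /predU1P [<- //|/hp].
Qed.

Lemma coefM_top p q a b :
  (size p <= a.+1)%N -> (size q <= b.+1)%N -> (p * q)`_(a + b) = p`_a * q`_b.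
Proof.
move=> /leq_sizeP hp /leq_sizeP hq; rewrite coefM.
have ha : (a < (a + b).+1)%N by rewrite ltnS leq_addr.
rewrite (bigD1 (Ordinal ha)) //= addKn big1 ?addr0 // => j /eqP ne.
have [lt|ge] := ltnP j a; first by rewrite hq ?mulr0 // leq_subRL; lia.
rewrite hp ?mul0r // ltn_neqAle ge andbT.
by apply/eqP => e; apply: ne; exact: val_inj.
Qed.

End PolySize.

Lemma det_mx22 (R : comNzRingType) (M : 'M[R]_2) :
  \det M = M 0 0 * M 1 1 - M 0 1 * M 1 0.
Proof.
rewrite (expand_det_row _ 0) !big_ord_recl big_ord0 /cofactor !det_mx11 !mxE /=.
rewrite /bump /= expr0 expr1 mul1r mulN1r addr0 mulrN.
by congr (_ * M _ _ - M _ _ * M _ _); apply: val_inj.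
Qed.

Lemma horner_eq_poly (F : numFieldType) (p q : {poly F}) :
  (forall x, p.[x] = q.[x]) -> p = q.
Proof.
move=> pq; apply/eqP; rewrite -subr_eq0; apply/negPn/negP => pq_neq0.
pose xs := [seq i%:R : F | i <- iota 0 (size (p - q))].
have /max_poly_roots : all (root (p - q)) xs.
  by apply/allP => x _; rewrite /root hornerD hornerN pq subrr.
rewrite map_inj_uniq ?iota_uniq; last by move=> i j /eqP; rewrite eqr_nat => /eqP.
by rewrite size_map size_iota ltnn => /(_ pq_neq0 isT).
Qed.

Lemma nzeros_mult_size (F : closedFieldType) (p : {poly F}) :
  p != 0 -> nzeros_mult p (size p).-1.
Proof.
move=> p_neq0; split=> //.
have [rs def_p] := closed_field_poly_normal p.
have lc_neq0 : lead_coef p != 0 by rewrite lead_coef_eq0.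
have mup_p z : mup z p = count_mem z rs.
  rewrite def_p -mul_polyC mupM ?polyC_eq0 ?monic_neq0 ?monic_prod_XsubC //.
  by rewrite mupNroot ?mu_prod_XsubC // rootC.
exists (undup rs); split.
- exact: undup_uniq.
- by move=> z; rewrite def_p rootZ // root_prod_XsubC mem_undup.
- rewrite (eq_bigr (fun z => count_mem z rs)) // def_p size_scale // size_prod_XsubC /=.
  have := big_undup_iterop_count addn rs predT (fun _ => 1%N).
  rewrite sum1_size => <-; apply: eq_bigr => i _.
  by case: (count_mem i rs) => //= k; elim: k => //= k ->.
Qed.

Lemma nzeros_mult_coef (F : closedFieldType) (p : {poly F}) n :
  (size p <= n.+1)%N ->
  (p`_n != 0 -> nzeros_mult p n) /\
  (p`_n = 0 -> p != 0 -> exists k, (k < n)%N /\ nzeros_mult p k).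
Proof.
move=> size_p; split=> [pn_neq0 | pn0 p_neq0].
  have p_neq0 : p != 0 by apply: contraNneq pn_neq0 => ->; rewrite coef0.
  have size_pn : size p = n.+1.
    apply/eqP; rewrite eqn_leq size_p ltnNge.
    by apply: contra pn_neq0 => /leq_sizeP ->.
  by have := nzeros_mult_size p_neq0; rewrite size_pn.
exists (size p).-1; split; last exact: nzeros_mult_size.
by rewrite prednK ?size_poly_gt0 // size_poly_leq_coef.
Qed.

Section BoundaryDeterminant.
Variable F : comNzRingType.
Local Notation state := ({poly F} * {poly F})%type.
Implicit Types (s : state) (c : F).

Definition wronskian s1 s2 : {poly F} := s1.1 * s2.2 - s1.2 * s2.1.

Definition lform c1 c2 s : {poly F} := c1%:P * s.1 + c2%:P * s.2.

Definition lcoef c1 c2 k s : F := c1 * s.1`_k + c2 * s.2`_k.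

Definition size_pair_leq n s := (size s.1 <= n)%N && (size s.2 <= n)%N.

Lemma size_lform_leq c1 c2 n s : size_pair_leq n s -> (size (lform c1 c2 s) <= n)%N.
Proof.
by case/andP=> h1 h2; apply: size_polyD_leq; apply: leq_trans (size_polyCM_leq _ _) _.
Qed.

Lemma coef_lform c1 c2 k s : (lform c1 c2 s)`_k = lcoef c1 c2 k s.
Proof. by rewrite coefD !coefCM. Qed.

Variables a1 a2 a3 a4 b1 b2 b3 b4 : F.

Definition bpoly c1 c2 c3 c4 (sl sr : state) := lform c1 c2 sl + lform c3 c4 sr.

Definition bdet (Cl Cr Sl Sr : state) : {poly F} :=
  bpoly a1 a2 a3 a4 Cl Cr * bpoly b1 b2 b3 b4 Sl Sr
  - bpoly b1 b2 b3 b4 Cl Cr * bpoly a1 a2 a3 a4 Sl Sr.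

Lemma bdet_top (Cl Cr Sl Sr : state) l n :
  size_pair_leq l.+1 Cl -> size_pair_leq l.+1 Sl ->
  size_pair_leq n.+1 Cr -> size_pair_leq n.+1 Sr ->
  (size (wronskian Cl Sl) <= l + n)%N -> (size (wronskian Cr Sr) <= l + n)%N ->
  (size (bdet Cl Cr Sl Sr) <= (l + n).+1)%N /\
  (bdet Cl Cr Sl Sr)`_(l + n) =
      lcoef a1 a2 l Cl * lcoef b3 b4 n Sr + lcoef a3 a4 n Cr * lcoef b1 b2 l Sl
    - lcoef b1 b2 l Cl * lcoef a3 a4 n Sr - lcoef b3 b4 n Cr * lcoef a1 a2 l Sl.
Proof.
move=> hCl hSl hCr hSr hWl hWr.
(* Cauchy-Binet for the 2x4 boundary matrix *)
pose mixed c1 c2 c3 c4 (sl sr : state) := lform c1 c2 sl * lform c3 c4 sr.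
have -> : bdet Cl Cr Sl Sr =
    (a1 * b2 - a2 * b1)%:P * wronskian Cl Sl + (a3 * b4 - a4 * b3)%:P * wronskian Cr Sr
  + (mixed a1 a2 b3 b4 Cl Sr + mixed b1 b2 a3 a4 Sl Cr
     - mixed b1 b2 a3 a4 Cl Sr - mixed a1 a2 b3 b4 Sl Cr).
  rewrite /bdet /bpoly /mixed /lform /wronskian !polyCB !polyCM; ring.
have size_mixed c1 c2 c3 c4 sl sr : size_pair_leq l.+1 sl -> size_pair_leq n.+1 sr ->
    (size (mixed c1 c2 c3 c4 sl sr) <= (l + n).+1)%N /\
    (mixed c1 c2 c3 c4 sl sr)`_(l + n) = lcoef c1 c2 l sl * lcoef c3 c4 n sr.
  move=> /(size_lform_leq c1 c2) hl /(size_lform_leq c3 c4) hr.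
  split; last by rewrite coefM_top // !coef_lform.
  by apply: leq_trans (size_polyMleq _ _) _; lia.
have [s1 e1] := size_mixed a1 a2 b3 b4 _ _ hCl hSr.
have [s2 e2] := size_mixed b1 b2 a3 a4 _ _ hSl hCr.
have [s3 e3] := size_mixed b1 b2 a3 a4 _ _ hCl hSr.
have [s4 e4] := size_mixed a1 a2 b3 b4 _ _ hSl hCr.
have hW : (size ((a1 * b2 - a2 * b1)%:P * wronskian Cl Sl
                 + (a3 * b4 - a4 * b3)%:P * wronskian Cr Sr)%R <= l + n)%N.
  by apply: size_polyD_leq; apply: leq_trans (size_polyCM_leq _ _) _.
split.
  apply: size_polyD_leq; first exact: leq_trans hW _.
  by do 2![apply: size_polyB_leq => //]; apply: size_polyD_leq.
rewrite coefD (nth_default _ hW) add0r !coefB coefD e1 e2 e3 e4; ring.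
Qed.

End BoundaryDeterminant.

Section Recurrence.
Variable F : idomainType.
Variables (mu qs : nat -> F) (r : nat).
Local Notation state := ({poly F} * {poly F})%type.
Implicit Types (s : state) (z d : F) (i k : nat).

(* [fwd z d k] and [bwd z d k] are the values (y, y^Delta) at the points r + k and
   r - k, as polynomials in lambda, of the solution with y = z and y^Delta = d at
   the point r; the inhomogeneous term q(t) y(a) is [qs i * z]. *)
Definition fwd_step i z s : state :=
  let y := s.1 + (mu i)%:P * s.2 in (y, s.2 + (mu i)%:P * ((qs i * z)%:P - 'X * y)).

Definition bwd_step i z s : state :=
  let dy := s.2 - (mu i)%:P * ((qs i * z)%:P - 'X * s.1) in (s.1 - (mu i)%:P * dy, dy).

Fixpoint fwd z d k : state :=
  if k is k'.+1 then fwd_step (r + k') z (fwd z d k') else (z%:P, d%:P).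

Fixpoint bwd z d k : state :=
  if k is k'.+1 then bwd_step (r - k'.+1) z (bwd z d k') else (z%:P, d%:P).

Section Evaluation.
Variables (x : F) (Y dY : nat -> F) (M : nat).
Hypothesis Y_step : forall i, (i < M)%N -> Y i.+1 = Y i + mu i * dY i.
Hypothesis dY_step : forall i, (i.+1 < M)%N ->
  dY i.+1 = dY i + mu i * (qs i * Y r - x * Y i.+1).

Lemma horner_fwd k : (r + k < M)%N ->
  (fwd (Y r) (dY r) k).1.[x] = Y (r + k) /\ (fwd (Y r) (dY r) k).2.[x] = dY (r + k).
Proof.
elim: k => [|k IH] hk; first by rewrite /= !hornerC addn0.
rewrite addnS in hk; have [h1 h2] := IH (ltnW hk).
by rewrite /= !hornerE h1 h2 addnS Y_step ?dY_step ?Y_step // ltnW.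
Qed.

Lemma horner_bwd k : (r < M)%N -> (k <= r)%N ->
  (bwd (Y r) (dY r) k).1.[x] = Y (r - k) /\ (bwd (Y r) (dY r) k).2.[x] = dY (r - k).
Proof.
move=> rM; elim: k => [|k IH] hk; first by rewrite /= !hornerC subn0.
have [h1 h2] := IH (ltnW hk).
have ik : (r - k.+1).+1 = (r - k)%N by rewrite subnSK.
have hM : ((r - k.+1).+1 < M)%N by rewrite ik; exact: leq_ltn_trans (leq_subr _ _) rM.
have edY : dY (r - k) - mu (r - k.+1) * (qs (r - k.+1) * Y r - x * Y (r - k)) = dY (r - k.+1).
  by rewrite -ik dY_step // addrK.
by rewrite /= !hornerE h1 h2 edY -ik Y_step ?addrK // ltnW.
Qed.

End Evaluation.

Lemma size_fwd z d k :
  (size (fwd z d k).1 <= maxn k 1)%N /\ (size (fwd z d k).2 <= k.+1)%N.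
Proof.
elim: k => [|k [h1 h2]] /=; first by rewrite !size_polyC_leq1.
have hy : (size ((fwd z d k).1 + (mu (r + k))%:P * (fwd z d k).2)%R <= k.+1)%N.
  apply: size_polyD_leq; last exact: leq_trans (size_polyCM_leq _ _) h2.
  by apply: leq_trans h1 _; rewrite geq_max leqnSn.
split; first by apply: leq_trans hy _; rewrite leq_maxl.
apply: size_polyD_leq; first exact: leq_trans h2 _.
apply: leq_trans (size_polyCM_leq _ _) _.
apply: size_polyB_leq; last exact: size_polyXM_leq.
exact: leq_trans (size_polyC_leq1 _) _.
Qed.

Lemma coef_fwd1 z d k : (fwd z d k).1`_k = if k == 0%N then z else 0.
Proof.
case: k => [|k]; first by rewrite coefC.
by rewrite nth_default //; case: (size_fwd z d k.+1).
Qed.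

Lemma coef_fwd2 z d k : (fwd z d k.+1).2`_k.+1 =
  - mu (r + k) * ((if k == 0%N then z else 0) + mu (r + k) * (fwd z d k).2`_k).
Proof.
have [_ h2] := size_fwd z d k.
rewrite /= coefD coefCM coefB coefC coefXM /= coefD coefCM coef_fwd1 (nth_default _ h2).
by rewrite add0r sub0r mulrN mulNr.
Qed.

Lemma size_bwd z d k : size_pair_leq k.+1 (bwd z d k).
Proof.
elim: k => [|k /andP [h1 h2]]; first by rewrite /size_pair_leq !size_polyC_leq1.
have hd : (size ((bwd z d k).2 - (mu (r - k.+1))%:P
            * ((qs (r - k.+1) * z)%:P - 'X * (bwd z d k).1))%R <= k.+2)%N.
  apply: size_polyB_leq; first exact: leq_trans h2 _.
  apply: leq_trans (size_polyCM_leq _ _) _.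
  apply: size_polyB_leq; last exact: size_polyXM_leq.
  exact: leq_trans (size_polyC_leq1 _) _.
rewrite /size_pair_leq /= hd andbT; apply: size_polyB_leq; first exact: leq_trans h1 _.
exact: leq_trans (size_polyCM_leq _ _) _.
Qed.

Lemma coef_bwd z d k :
  (bwd z d k.+1).2`_k.+1 = mu (r - k.+1) * (bwd z d k).1`_k /\
  (bwd z d k.+1).1`_k.+1 = - mu (r - k.+1) * (bwd z d k.+1).2`_k.+1.
Proof.
have /andP [h1 h2] := size_bwd z d k.
split; last by rewrite [in LHS]/= coefB coefCM (nth_default _ h1) sub0r mulNr.
rewrite /= coefB coefCM coefB coefC coefXM /= (nth_default _ h2).
by rewrite !sub0r mulrN opprK.
Qed.

Lemma coef_bwd01 k : (bwd 0 1 k).1`_k = 0 /\ (bwd 0 1 k).2`_k = (k == 0%N)%:R.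
Proof.
have e1 j : (bwd 0 1 j).1`_j = 0.
  elim: j => [|j IH]; first by rewrite coefC.
  by have [e2 ->] := coef_bwd 0 1 j; rewrite e2 IH !mulr0.
split=> //; case: k => [|k]; first by rewrite coefC.
by have [-> _] := coef_bwd 0 1 k; rewrite e1 mulr0.
Qed.

Lemma size_bwd01 k : (size (bwd 0 1 k).1 <= k)%N.
Proof.
apply: size_poly_leq_coef; last exact: (coef_bwd01 k).1.
by case/andP: (size_bwd 0 1 k).
Qed.

Lemma wronskian_fwd_step i s1 s2 :
  wronskian (fwd_step i 1 s1) (fwd_step i 0 s2)
  = wronskian s1 s2 - (mu i * qs i)%:P * (fwd_step i 0 s2).1.
Proof. by rewrite /wronskian /= mulr1 mulr0 polyC0 polyCM; ring. Qed.

Lemma wronskian_bwd_step i s1 s2 :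
  wronskian (bwd_step i 1 s1) (bwd_step i 0 s2)
  = wronskian s1 s2 + (mu i * qs i)%:P * s2.1.
Proof. by rewrite /wronskian /= mulr1 mulr0 polyC0 polyCM; ring. Qed.

Lemma size_wronskian_fwd k : (size (wronskian (fwd 1 0 k) (fwd 0 1 k)) <= maxn k 1)%N.
Proof.
elim: k => [|k IH].
  by rewrite /wronskian /= mulr1 mulr0 subr0 size_polyC_leq1.
rewrite [fwd _ _ _.+1]/= wronskian_fwd_step; apply: size_polyB_leq.
  by apply: leq_trans IH _; rewrite geq_max !leq_max leqnSn orbT.
by apply: leq_trans (size_polyCM_leq _ _) _; case: (size_fwd 0 1 k.+1).
Qed.

Lemma size_wronskian_bwd k : (size (wronskian (bwd 1 0 k) (bwd 0 1 k)) <= maxn k 1)%N.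
Proof.
elim: k => [|k IH].
  by rewrite /wronskian /= mulr1 mulr0 subr0 size_polyC_leq1.
rewrite [bwd _ _ _.+1]/= wronskian_bwd_step; apply: size_polyD_leq.
  by apply: leq_trans IH _; rewrite geq_max !leq_max leqnSn orbT.
apply: leq_trans (size_polyCM_leq _ _) _.
by apply: leq_trans (size_bwd01 k) _; rewrite leq_max leqnSn.
Qed.

Hypothesis mu_neq0 : forall i, mu i != 0.

Lemma coef_bwd10 k : (0 < k)%N ->
  (bwd 1 0 k).2`_k != 0 /\ (bwd 1 0 k).1`_k = - mu (r - k) * (bwd 1 0 k).2`_k.
Proof.
have e1 j : (bwd 1 0 j).1`_j != 0.
  elim: j => [|j IH]; first by rewrite coefC oner_neq0.
  by have [e2 ->] := coef_bwd 1 0 j; rewrite e2 !mulf_neq0 ?oppr_eq0.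
case: k => [//|k] _; have [e2 e3] := coef_bwd 1 0 k.
by split; [rewrite e2 mulf_neq0 | exact: e3].
Qed.

Lemma coef_fwd01 k : (fwd 0 1 k).2`_k != 0.
Proof.
elim: k => [|k IH]; first by rewrite coefC oner_neq0.
by rewrite coef_fwd2 if_same add0r !mulf_neq0 ?oppr_eq0.
Qed.

Lemma coef_fwd10 k : (0 < k)%N ->
  (fwd 1 0 k).2`_k != 0 /\ (fwd 0 1 k).2`_k = mu r * (fwd 1 0 k).2`_k.
Proof.
case: k => [//|k] _; elim: k => [|k [IH1 IH2]].
  rewrite !coef_fwd2 !coefC /= addn0 mulr0 addr0 add0r mulr1.
  by split; [rewrite mulf_neq0 ?oppr_eq0 ?oner_neq0 | ring].
rewrite !(coef_fwd2 _ _ k.+1) /= !add0r IH2.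
by split; [rewrite !mulf_neq0 ?oppr_eq0 | ring].
Qed.

Variables a1 a2 a3 a4 b1 b2 b3 b4 : F.

Definition char_det n :=
  bdet a1 a2 a3 a4 b1 b2 b3 b4 (bwd 1 0 r) (fwd 1 0 n) (bwd 0 1 r) (fwd 0 1 n).

Lemma char_det_top n : (0 < r + n)%N ->
  (size (char_det n) <= (r + n).+1)%N /\
  exists2 K, K != 0 &
    (char_det n)`_(r + n) = K * ((a1 * mu 0 - a2) * b4 - (b1 * mu 0 - b2) * a4).
Proof.
move=> rn_gt0.
have size_fwd_pair z d : size_pair_leq n.+1 (fwd z d n).
  have [h1 h2] := size_fwd z d n; apply/andP; split=> //.
  by apply: leq_trans h1 _; rewrite geq_max leqnSn.
have Wl : (maxn r 1 <= r + n)%N by lia.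
have Wr : (maxn n 1 <= r + n)%N by lia.
have [size_P coef_P] := bdet_top a1 a2 a3 a4 b1 b2 b3 b4 (size_bwd 1 0 r) (size_bwd 0 1 r)
  (size_fwd_pair 1 0) (size_fwd_pair 0 1)
  (leq_trans (size_wronskian_bwd r) Wl) (leq_trans (size_wronskian_fwd n) Wr).
split=> //; rewrite /char_det {}coef_P /lcoef !coef_fwd1 !if_same.
have [-> ->] := coef_bwd01 r.
have [r0|r_gt0] := posnP r.
- have n_gt0 : (0 < n)%N by rewrite r0 in rn_gt0.
  have [C_neq0 ->] := coef_fwd10 n_gt0.
  exists (fwd 1 0 n).2`_n => //.
  rewrite r0 /= !coefC /= (negbTE (lt0n_neq0 n_gt0)).
  ring.
- have [C_neq0 ->] := coef_bwd10 r_gt0.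
  exists (- ((fwd 0 1 n).2`_n * (bwd 1 0 r).2`_r)).
    by rewrite oppr_eq0 mulf_neq0 ?coef_fwd01.
  rewrite subnn /=; ring.
Qed.

End Recurrence.

Section FiniteTimeScale.
Variables (R : realType) (ts : seq R).
Hypothesis ts_sorted : sorted <%R ts.
Local Notation t i := (nth 0 ts i).

Lemma nth_ts_lt i j : (i < j)%N -> (j < size ts)%N -> t i < t j.
Proof.
move=> ij js; apply: (sorted_ltn_nth lt_trans 0 ts_sorted) => //.
by rewrite inE (ltn_trans ij js).
Qed.

Lemma filter_lt_nth i : (i < size ts)%N -> [seq x <- ts | x < t i] = take i ts.
Proof.
move=> hi; rewrite -[X in filter _ X](cat_take_drop i ts) filter_cat.
rewrite [X in _ ++ X](eq_in_filter (a2 := pred0)) ?filter_pred0; last first.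
  move=> x /(nthP 0) [j hj <-]; rewrite size_drop in hj.
  rewrite nth_drop /=; case: j hj => [|j] hj; first by rewrite addn0 ltxx.
  rewrite ltn_subRL in hj.
  by rewrite lt_gtF // nth_ts_lt // addnS ltnS leq_addr.
rewrite cats0 (eq_in_filter (a2 := predT)) ?filter_predT //.
move=> x /(nthP 0) [j hj <-]; rewrite size_take hi in hj.
by rewrite nth_take //= nth_ts_lt.
Qed.

Lemma filter_gt_nth i : (i < size ts)%N -> [seq x <- ts | t i < x] = drop i.+1 ts.
Proof.
move=> hi; rewrite -[X in filter _ X](cat_take_drop i.+1 ts) filter_cat.
rewrite (eq_in_filter (a2 := pred0)) ?filter_pred0; last first.
  move=> x /(nthP 0) [j]; rewrite size_take_min leq_min ltnS => /andP [ji _] <-.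
  rewrite nth_take //=; case: ltngtP ji => // [ji|->] _; last by rewrite ltxx.
  by rewrite lt_gtF // nth_ts_lt.
rewrite (eq_in_filter (a2 := predT)) ?filter_predT //.
move=> x /(nthP 0) [j hj <-]; rewrite size_drop in hj.
rewrite ltn_subRL in hj.
by rewrite nth_drop /= nth_ts_lt // addSn ltnS leq_addr.
Qed.

Lemma pivot_position a r m : a \in ts ->
  size [seq x <- ts | x < a] = r -> size [seq x <- ts | a < x] = m ->
  a = t r /\ size ts = (r + m).+1.
Proof.
move=> a_ts; have hi : (index a ts < size ts)%N by rewrite index_mem.
rewrite -{1 2 3}(nth_index 0 a_ts) filter_lt_nth // filter_gt_nth //.
rewrite size_take hi size_drop => <- <-; split=> //.
by rewrite -addnS subnSK // subnKC // ltnW.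
Qed.

Lemma tsigma_nth i : (i.+1 < size ts)%N -> tsigma ts (t i) = t i.+1.
Proof.
move=> h; rewrite /tsigma filter_gt_nth ?(ltn_trans _ h) //.
by rewrite -nth0 nth_drop addn0 (set_nth_default 0).
Qed.

Lemma trho_tmax : (1 < size ts)%N -> trho ts (tmax ts) = t (size ts).-2.
Proof.
move=> h; have -> : tmax ts = t (size ts).-1 by rewrite nth_last.
rewrite /trho filter_lt_nth ?ltn_predL ?(ltnW h) // (last_nth 0) size_takel ?leq_pred //.
by case: (size ts) h => [//|[//|k]] _ /=; rewrite nth_take.
Qed.

Lemma mem_tkappa2_nth i : (i.+2 < size ts)%N -> t i \in tkappa2 ts.
Proof.
move=> h; have hi : (i < (size ts).-2)%N by rewrite -subn2 ltn_subRL add2n.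
rewrite /tkappa2 /tkappa size_takel ?leq_pred // take_takel ?leq_pred //.
rewrite -(nth_take 0 hi) mem_nth // size_takel //.
exact: leq_trans (leq_pred _) (leq_pred _).
Qed.

Lemma tdelta_nth (f : R -> R[i]) i : (i.+1 < size ts)%N ->
  tdelta ts f (t i) = (f (t i.+1) - f (t i)) / (tmu ts (t i))%:C.
Proof. by move=> hi; rewrite /tdelta tsigma_nth. Qed.

(* Padded with 1 past the last point, so that it never vanishes. *)
Definition mu_ts i : R[i] := if (i.+1 < size ts)%N then (tmu ts (t i))%:C else 1.

Lemma mu_ts_neq0 i : mu_ts i != 0.
Proof.
rewrite /mu_ts; case: ifP => hi; last exact: oner_neq0.
by rewrite fmorph_eq0 /tmu tsigma_nth // subr_eq0 gt_eqF // nth_ts_lt.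
Qed.

Lemma det_Amat a11 a12 a22 b11 b12 b22 : (1 < size ts)%N ->
  (\det (Amat ts a11 a12 a22 b11 b12 b22))%:C =
  (a11%:C * mu_ts 0 - a12%:C) * b22%:C - (b11%:C * mu_ts 0 - b12%:C) * a22%:C.
Proof.
move=> ts_gt1; rewrite det_mx22 !mxE /=.
have -> : tmin ts = t 0 by rewrite /tmin nth0.
by rewrite /mu_ts ts_gt1 !(rmorphB, rmorphM).
Qed.

Variables (q : R -> R) (r m : nat).
Hypotheses (size_ts : size ts = (r + m).+1) (m_gt0 : (0 < m)%N).

Definition q_ts i : R[i] := (q (t i))%:C.

Lemma bform_horner lam (y : R -> R[i]) c11 c12 c21 c22 :
  solves ts q (t r) lam y ->
  bform ts c11 c12 c21 c22 y =
  (bpoly c11%:C c12%:C c21%:C c22%:C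
     (bwd mu_ts q_ts r (y (t r)) (tdelta ts y (t r)) r)
     (fwd mu_ts q_ts r (y (t r)) (tdelta ts y (t r)) m.-1)).[lam].
Proof.
move=> sol; pose Y i := y (t i); pose dY i := tdelta ts y (t i).
have Y_step i : (i < r + m)%N -> Y i.+1 = Y i + mu_ts i * dY i.
  move=> hi; have hi' : (i.+1 < size ts)%N by rewrite size_ts.
  have := mu_ts_neq0 i; rewrite /dY /mu_ts hi' tdelta_nth // => mu_i.
  by rewrite mulrC divfK // addrC subrK.
have dY_step i : (i.+1 < r + m)%N ->
    dY i.+1 = dY i + mu_ts i * (q_ts i * Y r - lam * Y i.+1).
  move=> hi; have hi2 : (i.+2 < size ts)%N by rewrite size_ts.
  have hi' := ltnW hi2; have := sol _ (mem_tkappa2_nth hi2).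
  have := mu_ts_neq0 i; rewrite /dY /mu_ts hi' tsigma_nth // tdelta_nth // => mu_i <-.
  by rewrite /q_ts /Y; field.
have r_lt : (r < r + m)%N by rewrite -{1}(addn0 r) ltn_add2l.
have rm_lt : (r + m.-1 < r + m)%N by rewrite ltn_add2l prednK.
have [yl dyl] := horner_bwd Y_step dY_step r_lt (leqnn r).
have [yr dyr] := horner_fwd Y_step dY_step rm_lt.
rewrite /bform trho_tmax; last by rewrite size_ts ltnS addn_gt0 m_gt0 orbT.
have -> : tmin ts = t 0 by rewrite /tmin nth0.
have -> : (size ts).-2 = (r + m.-1)%N by rewrite size_ts -subn1 -addnBA // subn1.
by rewrite /bpoly /lform !hornerD !hornerCM yl dyl yr dyr subnn addrA.
Qed.

End FiniteTimeScale.

Unset Implicit Arguments.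

Theorem theorem2 (R : realType) (ts : seq R) (a : R) (m r : nat)
  (q : R -> R) (a11 a12 a21 a22 b11 b12 b21 b22 : R)
  (S Cs : R[i] -> R -> R[i]) (D : {poly R[i]}) :
  sorted <%R ts -> a \in ts ->
  size [seq x <- ts | a < x] = m -> size [seq x <- ts | x < a] = r ->
  (1 <= m)%N -> (2 <= r + m)%N ->
  (forall lam, solves ts q a lam (S lam) /\ S lam a = 0 /\ tdelta ts (S lam) a = 1) ->
  (forall lam, solves ts q a lam (Cs lam) /\ Cs lam a = 1 /\ tdelta ts (Cs lam) a = 0) ->
  (forall lam, D.[lam] =
      bform ts a11 a12 a21 a22 (Cs lam) * bform ts b11 b12 b21 b22 (S lam)
    - bform ts b11 b12 b21 b22 (Cs lam) * bform ts a11 a12 a21 a22 (S lam)) ->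
  (\det (Amat ts a11 a12 a22 b11 b12 b22) != 0 -> nzeros_mult D (size ts - 2)) /\
  (\det (Amat ts a11 a12 a22 b11 b12 b22) = 0 -> D != 0 ->
     exists k, (k < size ts - 2)%N /\ nzeros_mult D k).
Proof.
move=> ts_sorted a_ts size_gt size_lt m_gt0 rm_ge2 HS HC HD.
have [a_r size_ts] := pivot_position ts_sorted a_ts size_lt size_gt; subst a.
have -> : (size ts - 2 = r + m.-1)%N by rewrite size_ts; lia.
have -> : D = char_det (mu_ts ts) (q_ts ts q) r a11%:C a12%:C a21%:C a22%:C
                        b11%:C b12%:C b21%:C b22%:C m.-1.
  apply: horner_eq_poly => lam; rewrite HD.
  have [solC [C_a dC_a]] := HC lam; have [solS [S_a dS_a]] := HS lam.
  rewrite !(bform_horner ts_sorted size_ts m_gt0 _ _ _ _ solC).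
  rewrite !(bform_horner ts_sorted size_ts m_gt0 _ _ _ _ solS).
  by rewrite C_a dC_a S_a dS_a /char_det /bdet !hornerE.
have rm_gt0 : (0 < r + m.-1)%N by lia.
have ts_gt1 : (1 < size ts)%N by rewrite size_ts; lia.
have [size_P [K K_neq0]] := char_det_top (q_ts ts q) (mu_ts_neq0 ts_sorted)
  a11%:C a12%:C a21%:C a22%:C b11%:C b12%:C b21%:C b22%:C rm_gt0.
rewrite -det_Amat // => coef_P.
have [top_neq0 top_eq0] := nzeros_mult_coef size_P; split=> [det_neq0|det0].
  by apply: top_neq0; rewrite coef_P mulf_neq0 // fmorph_eq0.
by apply: top_eq0; rewrite coef_P det0 rmorph0 mulr0.
Qed.
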